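(* Let $(\{T_g\}_{g\in G},\{\gamma_{g,h}\}_{g,h\in G},u)$ be a (global) action of a group $G$ on a (strict) monoidal category $\mathcal{C}$, and let $X$ be an object of $\mathcal{C}$. (a) Given a family $\{\sigma^X_g\}_{g\in G}$ making $(X,\{\sigma^X_g\})$ a partially $G$-equivariant object, there is a family $\{\theta_g\}_{g\in G}$ making $(X,\{\theta_g\})$ a (global) $G$-equivariant object. (b) Conversely, given a family $\{\theta_g\}_{g\in G}$ making $(X,\{\theta_g\})$ a $G$-equivariant object, there is a family $\{\sigma^X_g\}_{g\in G}$ making $(X,\{\sigma^X_g\})$ a partially $G$-equivariant object.
   Context: A (global) action of $G$ (unit $e$) on the monoidal category $\mathcal{C}$ consists of monoidal auto-equivalences $(T_g,J^g,J^{g0})$ of $\mathcal{C}$ (with $J^g\colon T_g(-)\otimes T_g(-)\Rightarrow T_g(-\otimes-)$ a natural isomorphism satisfying the hexagon axiom and $J^{g0}\colon\mathbb{1}\to T_g(\mathbb{1})$ an isomorphism compatible with the unit constraints), monoidal natural isomorphisms $\gamma_{g,h}\colon T_gT_h\Rightarrow T_{gh}$ and $u\colon\mathrm{Id}_{\mathcal{C}}\Rightarrow T_e$, such that $(\gamma_{gh,k})_X\circ(\gamma_{g,h})_{T_k(X)}=(\gamma_{g,hk})_X\circ T_g((\gamma_{h,k})_X)$, and $u_{T_g(X)}$, $(\gamma_{e,g})_X$ are mutually inverse, as are $T_g(u_X)$, $(\gamma_{g,e})_X$. A $G$-equivariant object is a pair $(X,\{\theta_g\}_{g\in G})$ with isomorphisms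 $\theta_g\colon T_g(X)\to X$ such that $\theta_{gh}\circ(\gamma_{g,h})_X=\theta_g\circ T_g(\theta_h)$ for all $g,h$ and $\theta_e\circ u_X=\mathrm{id}_X$. A partially $G$-equivariant object is a pair $(X,\{\sigma^X_g\}_{g\in G})$ with natural isomorphisms $\sigma^X_g\colon T_g(X\otimes-)\Rightarrow X\otimes T_g(-)$ such that for all $g,h\in G$ and objects $Y$: $(\sigma^X_{gh})_Y\circ(\gamma_{g,h})_{X\otimes Y}=(X\otimes(\gamma_{g,h})_Y)\circ(\sigma^X_g)_{T_h(Y)}\circ T_g((\sigma^X_h)_Y)$, and $(\sigma^X_e)_Y\circ u_{X\otimes Y}=X\otimes u_Y$. *)

Record Group := {
  gcar :> Type;
  gmul : gcar -> gcar -> gcar;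
  gone : gcar;
  ginv : gcar -> gcar;
  gmulA : forall x y z, gmul x (gmul y z) = gmul (gmul x y) z;
  gmul1l : forall x, gmul gone x = x;
  gmul1r : forall x, gmul x gone = x;
  gmulVl : forall x, gmul (ginv x) x = gone;
  gmulVr : forall x, gmul x (ginv x) = gone }.
Arguments gmul {g} x y : rename.
Arguments gone {g} : rename.
Arguments ginv {g} x : rename.

Record Category := {
  ob :> Type;
  hom : ob -> ob -> Type;
  idm : forall a, hom a a;
  comp : forall a b c, hom b c -> hom a b -> hom a c;
  comp_id_l : forall a b (f : hom a b), comp a b b (idm b) f = f;
  comp_id_r : forall a b (f : hom a b), comp a a b f (idm a) = f;
  comp_assoc : forall a b c d (f : hom a b) (g : hom b c) (h : hom c d),
      comp a c d h (comp a b c g f) = comp a b d (comp b c d h g) f }.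
Arguments hom {C} a b : rename.
Arguments idm {C} a : rename.
Arguments comp {C a b c} g f : rename.

Notation "g ⊚ f" := (comp g f) (at level 40, left associativity).

Definition is_iso {C : Category} {a b : C} (f : hom a b) : Prop :=
  exists g : hom b a, g ⊚ f = idm a /\ f ⊚ g = idm b.

Definition eq_hom {C : Category} {a b : C} (e : a = b) : hom a b :=
  match e in _ = b' return hom a b' with eq_refl => idm a end.

Record MonoidalCategory := {
  mcat :> Category;
  tens : ob mcat -> ob mcat -> ob mcat;
  tensm : forall a a' b b' : ob mcat,
      hom a a' -> hom b b' -> hom (tens a b) (tens a' b');
  munit : ob mcat;
  tensm_id : forall a b, tensm a a b b (idm a) (idm b) = idm (tens a b);
  tensm_comp : forall a a' a'' b b' b''
      (f : hom a a') (f' : hom a' a'') (g : hom b b') (g' : hom b' b''),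
      tensm a a'' b b'' (f' ⊚ f) (g' ⊚ g)
      = tensm a' a'' b' b'' f' g' ⊚ tensm a a' b b' f g;
  assoc : forall a b c, hom (tens (tens a b) c) (tens a (tens b c));
  lunit : forall a, hom (tens munit a) a;
  runit : forall a, hom (tens a munit) a;
  assoc_iso : forall a b c, is_iso (assoc a b c);
  lunit_iso : forall a, is_iso (lunit a);
  runit_iso : forall a, is_iso (runit a);
  assoc_nat : forall a a' b b' c c' (f : hom a a') (g : hom b b') (h : hom c c'),
      assoc a' b' c' ⊚ tensm _ _ _ _ (tensm _ _ _ _ f g) h
      = tensm _ _ _ _ f (tensm _ _ _ _ g h) ⊚ assoc a b c;
  lunit_nat : forall a a' (f : hom a a'),
      lunit a' ⊚ tensm _ _ _ _ (idm munit) f = f ⊚ lunit a;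
  runit_nat : forall a a' (f : hom a a'),
      runit a' ⊚ tensm _ _ _ _ f (idm munit) = f ⊚ runit a;
  pentagon : forall a b c d,
      assoc a b (tens c d) ⊚ assoc (tens a b) c d
      = tensm _ _ _ _ (idm a) (assoc b c d) ⊚ assoc a (tens b c) d
        ⊚ tensm _ _ _ _ (assoc a b c) (idm d);
  triangle : forall a b,
      tensm _ _ _ _ (idm a) (lunit b) ⊚ assoc a munit b
      = tensm _ _ _ _ (runit a) (idm b) }.
Arguments tens {M} a b : rename.
Arguments tensm {M a a' b b'} f g : rename.
Arguments munit {M} : rename.
Arguments assoc {M} a b c : rename.
Arguments lunit {M} a : rename.
Arguments runit {M} a : rename.

Notation "a ⊗ b" := (tens a b) (at level 35, right associativity).
Notation "f ⊗m g" := (tensm f g) (at level 35, right associativity).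

Definition strict_monoidal (M : MonoidalCategory) : Prop :=
  (forall a b c : M, exists e : (a ⊗ b) ⊗ c = a ⊗ (b ⊗ c), assoc a b c = eq_hom e)
  /\ (forall a : M, exists e : munit ⊗ a = a, lunit a = eq_hom e)
  /\ (forall a : M, exists e : a ⊗ munit = a, runit a = eq_hom e).

Record EndoFunctor (C : Category) := {
  fobj :> ob C -> ob C;
  fmap : forall a b : ob C, hom a b -> hom (fobj a) (fobj b);
  fmap_id : forall a, fmap a a (idm a) = idm (fobj a);
  fmap_comp : forall a b c (f : hom a b) (g : hom b c),
      fmap a c (g ⊚ f) = fmap b c g ⊚ fmap a b f }.
Arguments fobj {C} F a : rename.
Arguments fmap {C} F {a b} f : rename.

Definition is_equivalence {C : Category} (F : EndoFunctor C) : Prop :=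
  (forall (a b : C) (f g : hom a b), fmap F f = fmap F g -> f = g)
  /\ (forall (a b : C) (k : hom (F a) (F b)), exists f : hom a b, fmap F f = k)
  /\ (forall b : C, exists (a : C) (f : hom (F a) b), is_iso f).

Record MonoidalFunctor (M : MonoidalCategory) := {
  mfun :> EndoFunctor M;
  mJ : forall a b : ob M, hom (mfun a ⊗ mfun b) (mfun (a ⊗ b));
  mJ0 : hom munit (mfun munit);
  mJ_iso : forall a b, is_iso (mJ a b);
  mJ_nat : forall a a' b b' (f : hom a a') (g : hom b b'),
      mJ a' b' ⊚ (fmap mfun f ⊗m fmap mfun g) = fmap mfun (f ⊗m g) ⊚ mJ a b;
  mJ0_iso : is_iso mJ0;
  mJ_hexagon : forall a b c,
      fmap mfun (assoc a b c) ⊚ mJ (a ⊗ b) c ⊚ (mJ a b ⊗m idm (mfun c))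
      = mJ a (b ⊗ c) ⊚ (idm (mfun a) ⊗m mJ b c)
        ⊚ assoc (mfun a) (mfun b) (mfun c);
  mJ0_lunit : forall a,
      fmap mfun (lunit a) ⊚ mJ munit a ⊚ (mJ0 ⊗m idm (mfun a)) = lunit (mfun a);
  mJ0_runit : forall a,
      fmap mfun (runit a) ⊚ mJ a munit ⊚ (idm (mfun a) ⊗m mJ0) = runit (mfun a) }.
Arguments mfun {M} T : rename.
Arguments mJ {M} T a b : rename.
Arguments mJ0 {M} T : rename.

Record GAction (G : Group) (M : MonoidalCategory) := {
  act : G -> MonoidalFunctor M;
  act_equiv : forall g, is_equivalence (mfun (act g));
  gam : forall (g h : G) (a : ob M), hom (act g (act h a)) (act (gmul g h) a);
  uu : forall a : ob M, hom a (act gone a);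
  gam_iso : forall g h a, is_iso (gam g h a);
  gam_nat : forall g h a b (f : hom a b),
      gam g h b ⊚ fmap (act g) (fmap (act h) f) = fmap (act (gmul g h)) f ⊚ gam g h a;
  gam_monJ : forall g h a b,
      gam g h (a ⊗ b) ⊚ fmap (act g) (mJ (act h) a b) ⊚ mJ (act g) (act h a) (act h b)
      = mJ (act (gmul g h)) a b ⊚ (gam g h a ⊗m gam g h b);
  gam_monJ0 : forall g h,
      gam g h munit ⊚ fmap (act g) (mJ0 (act h)) ⊚ mJ0 (act g) = mJ0 (act (gmul g h));
  uu_iso : forall a, is_iso (uu a);
  uu_nat : forall a b (f : hom a b), uu b ⊚ f = fmap (act gone) f ⊚ uu a;
  uu_monJ : forall a b, uu (a ⊗ b) = mJ (act gone) a b ⊚ (uu a ⊗m uu b);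
  uu_monJ0 : uu munit = mJ0 (act gone);
  (* (gamma_{gh,k})_X o (gamma_{g,h})_{T_k X} = (gamma_{g,hk})_X o T_g((gamma_{h,k})_X),
     where T_{g(hk)} X and T_{(gh)k} X are identified via associativity of G *)
  gam_assoc : forall g h k a,
      gam (gmul g h) k a ⊚ gam g h (act k a)
      = eq_hom (f_equal (fun x => fobj (act x) a) (gmulA G g h k))
        ⊚ gam g (gmul h k) a ⊚ fmap (act g) (gam h k a);
  gam_unit_l1 : forall g a,
      eq_hom (f_equal (fun x => fobj (act x) a) (gmul1l G g)) ⊚ gam gone g a
        ⊚ uu (act g a) = idm (act g a);
  gam_unit_l2 : forall g a,
      uu (act g a) ⊚ (eq_hom (f_equal (fun x => fobj (act x) a) (gmul1l G g))
        ⊚ gam gone g a) = idm (act gone (act g a));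
  gam_unit_r1 : forall g a,
      eq_hom (f_equal (fun x => fobj (act x) a) (gmul1r G g)) ⊚ gam g gone a
        ⊚ fmap (act g) (uu a) = idm (act g a);
  gam_unit_r2 : forall g a,
      fmap (act g) (uu a) ⊚ (eq_hom (f_equal (fun x => fobj (act x) a) (gmul1r G g))
        ⊚ gam g gone a) = idm (act g (act gone a)) }.
Arguments act {G M} A g : rename.
Arguments gam {G M} A g h a : rename.
Arguments uu {G M} A a : rename.

Definition equivariant {G : Group} {M : MonoidalCategory} (A : GAction G M)
    (X : ob M) (theta : forall g : G, hom (act A g X) X) : Prop :=
  (forall g, is_iso (theta g))
  /\ (forall g h, theta (gmul g h) ⊚ gam A g h X = theta g ⊚ fmap (act A g) (theta h))
  /\ theta gone ⊚ uu A X = idm X.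

Definition partially_equivariant {G : Group} {M : MonoidalCategory} (A : GAction G M)
    (X : ob M) (sigma : forall (g : G) (Y : ob M), hom (act A g (X ⊗ Y)) (X ⊗ act A g Y))
    : Prop :=
  (forall g Y, is_iso (sigma g Y))
  /\ (forall g Y Y' (f : hom Y Y'),
        sigma g Y' ⊚ fmap (act A g) (idm X ⊗m f) = (idm X ⊗m fmap (act A g) f) ⊚ sigma g Y)
  /\ (forall g h Y,
        sigma (gmul g h) Y ⊚ gam A g h (X ⊗ Y)
        = (idm X ⊗m gam A g h Y) ⊚ sigma g (act A h Y) ⊚ fmap (act A g) (sigma h Y))
  /\ (forall Y, sigma gone Y ⊚ uu A (X ⊗ Y) = idm X ⊗m uu A Y).

From Stdlib Require Import IndefiniteDescription.

(* Evaluating a partially equivariant structure at the unit object and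
   correcting by the inverse of the unit constraint [J0] of each [T_g] gives an
   equivariant structure on [X ⊗ 1], which the right unitor transports to [X].
   Conversely, [(θ_g ⊗ 1) ∘ J_g^-1] is a partially equivariant structure. In both
   directions the axioms follow by cancelling the isomorphism [J0] resp. [J]
   and using that [γ] and [u] are monoidal transformations. *)

Section Isomorphisms.
Context {C : Category}.

Definition inv {a b : C} (f : hom a b) (H : is_iso f) : hom b a :=
  proj1_sig (constructive_indefinite_description _ H).

Lemma inv_comp {a b : C} (f : hom a b) (H : is_iso f) : inv f H ⊚ f = idm a.
Proof. exact (proj1 (proj2_sig (constructive_indefinite_description _ H))). Qed.

Lemma comp_inv {a b : C} (f : hom a b) (H : is_iso f) : f ⊚ inv f H = idm b.
Proof. exact (proj2 (proj2_sig (constructive_indefinite_description _ H))). Qed.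

Lemma is_iso_inv {a b : C} (f : hom a b) (H : is_iso f) : is_iso (inv f H).
Proof. exists f. split; [apply comp_inv | apply inv_comp]. Qed.

Lemma is_iso_idm (a : C) : is_iso (idm a).
Proof. exists (idm a). split; apply comp_id_l. Qed.

Lemma is_iso_comp {a b c : C} (f : hom a b) (g : hom b c) :
  is_iso f -> is_iso g -> is_iso (g ⊚ f).
Proof.
  intros Hf Hg. exists (inv f Hf ⊚ inv g Hg). split.
  - rewrite comp_assoc, <- (comp_assoc _ _ _ _ _ g), inv_comp, comp_id_r. apply inv_comp.
  - rewrite comp_assoc, <- (comp_assoc _ _ _ _ _ (inv f Hf)), comp_inv, comp_id_r.
    apply comp_inv.
Qed.

Lemma iso_cancel_l {a b c : C} (p : hom b c) (Hp : is_iso p) {x y : hom a b} :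
  p ⊚ x = p ⊚ y -> x = y.
Proof.
  intros E.
  rewrite <- (comp_id_l _ _ _ x), <- (comp_id_l _ _ _ y), <- (inv_comp p Hp),
    <- !comp_assoc, E.
  reflexivity.
Qed.

Lemma iso_cancel_r {a b c : C} (p : hom a b) (Hp : is_iso p) {x y : hom b c} :
  x ⊚ p = y ⊚ p -> x = y.
Proof.
  intros E.
  rewrite <- (comp_id_r _ _ _ x), <- (comp_id_r _ _ _ y), <- (comp_inv p Hp),
    !comp_assoc, E.
  reflexivity.
Qed.

Lemma postcomp_eq {a b c d : C} {p : hom a b} {q : hom b c} {s : hom a c} (x : hom c d) :
  q ⊚ p = s -> x ⊚ q ⊚ p = x ⊚ s.
Proof. intros E. rewrite <- E, comp_assoc. reflexivity. Qed.

End Isomorphisms.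

Lemma is_iso_fmap {C : Category} (F : EndoFunctor C) {a b : C} (f : hom a b) :
  is_iso f -> is_iso (fmap F f).
Proof.
  intros [f' [H1 H2]]. exists (fmap F f').
  rewrite <- !fmap_comp, H1, H2, !fmap_id. split; reflexivity.
Qed.

Lemma is_iso_tensm {M : MonoidalCategory} {a a' b b' : M} (f : hom a a') (g : hom b b') :
  is_iso f -> is_iso g -> is_iso (f ⊗m g).
Proof.
  intros [f' [F1 F2]] [g' [G1 G2]]. exists (f' ⊗m g').
  rewrite <- !tensm_comp, F1, F2, G1, G2, !tensm_id. split; reflexivity.
Qed.

Section Transport.
Context {G : Group} {M : MonoidalCategory} (A : GAction G M).
Context {a b : M} (phi : hom a b) (Hphi : is_iso phi).
Context (theta : forall g : G, hom (act A g a) a).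

Definition transport_equivariant (g : G) : hom (act A g b) b :=
  phi ⊚ theta g ⊚ fmap (act A g) (inv phi Hphi).

Lemma transport_equivariant_fmap (g : G) :
  transport_equivariant g ⊚ fmap (act A g) phi = phi ⊚ theta g.
Proof.
  unfold transport_equivariant.
  rewrite <- comp_assoc, <- fmap_comp, inv_comp, fmap_id, comp_id_r. reflexivity.
Qed.

Lemma equivariant_transport :
  equivariant A a theta -> equivariant A b transport_equivariant.
Proof.
  intros [Hiso [Hcocycle Hunit]]. split; [| split].
  - intros g. unfold transport_equivariant.
    apply is_iso_comp; [apply is_iso_fmap, is_iso_inv |].
    apply is_iso_comp; [apply Hiso | exact Hphi].
  - intros g h.
    apply (iso_cancel_r (fmap (act A g) (fmap (act A h) phi))).
    { apply is_iso_fmap, is_iso_fmap, Hphi. }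
    rewrite <- !comp_assoc, <- !fmap_comp, transport_equivariant_fmap, gam_nat, fmap_comp,
      !comp_assoc, !transport_equivariant_fmap, <- !comp_assoc, Hcocycle.
    reflexivity.
  - apply (iso_cancel_r phi Hphi).
    rewrite <- comp_assoc, uu_nat, comp_assoc, transport_equivariant_fmap,
      <- comp_assoc, Hunit, comp_id_l, comp_id_r.
    reflexivity.
Qed.

End Transport.

Section PartialToGlobal.
Context {G : Group} {M : MonoidalCategory} (A : GAction G M) (X : ob M).
Context (sigma : forall (g : G) (Y : ob M), hom (act A g (X ⊗ Y)) (X ⊗ act A g Y)).

Definition partial_at_unit (g : G) : hom (act A g (X ⊗ munit)) (X ⊗ munit) :=
  (idm X ⊗m inv (mJ0 (act A g)) (mJ0_iso _ _)) ⊚ sigma g munit.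

Lemma mJ0_partial_at_unit (g : G) :
  (idm X ⊗m mJ0 (act A g)) ⊚ partial_at_unit g = sigma g munit.
Proof.
  unfold partial_at_unit.
  rewrite comp_assoc, <- tensm_comp, comp_inv, comp_id_l, tensm_id, comp_id_l.
  reflexivity.
Qed.

Lemma partially_equivariant_at_unit :
  partially_equivariant A X sigma -> equivariant A (X ⊗ munit) partial_at_unit.
Proof.
  intros [Hiso [Hnat [Hcocycle Hunit]]]. split; [| split].
  - intros g. unfold partial_at_unit.
    apply is_iso_comp; [apply Hiso |].
    apply is_iso_tensm; [apply is_iso_idm | apply is_iso_inv].
  - intros g h.
    apply (iso_cancel_l (idm X ⊗m mJ0 (act A (gmul g h)))).
    { apply is_iso_tensm; [apply is_iso_idm | apply mJ0_iso]. }
    assert (Hsplit : idm X ⊗m mJ0 (act A (gmul g h))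
      = (idm X ⊗m gam A g h munit) ⊚ (idm X ⊗m fmap (act A g) (mJ0 (act A h)))
        ⊚ (idm X ⊗m mJ0 (act A g))).
    { rewrite <- gam_monJ0, <- !tensm_comp, !comp_id_l. reflexivity. }
    rewrite comp_assoc, mJ0_partial_at_unit, Hcocycle, Hsplit, !comp_assoc,
      (postcomp_eq _ (mJ0_partial_at_unit g)), (postcomp_eq _ (eq_sym (Hnat g _ _ _))),
      <- (mJ0_partial_at_unit h), fmap_comp, !comp_assoc.
    reflexivity.
  - apply (iso_cancel_l (idm X ⊗m mJ0 (act A gone))).
    { apply is_iso_tensm; [apply is_iso_idm | apply mJ0_iso]. }
    rewrite comp_assoc, mJ0_partial_at_unit, Hunit, uu_monJ0, comp_id_r.
    reflexivity.
Qed.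

End PartialToGlobal.

Section GlobalToPartial.
Context {G : Group} {M : MonoidalCategory} (A : GAction G M) (X : ob M).
Context (theta : forall g : G, hom (act A g X) X).

Definition partial_of_equivariant (g : G) (Y : ob M) :
    hom (act A g (X ⊗ Y)) (X ⊗ act A g Y) :=
  (theta g ⊗m idm (act A g Y)) ⊚ inv (mJ (act A g) X Y) (mJ_iso _ _ _ _).

Lemma partial_of_equivariant_mJ (g : G) (Y : ob M) :
  partial_of_equivariant g Y ⊚ mJ (act A g) X Y = theta g ⊗m idm (act A g Y).
Proof.
  unfold partial_of_equivariant.
  rewrite <- comp_assoc, inv_comp, comp_id_r. reflexivity.
Qed.

Lemma equivariant_partially_equivariant :
  equivariant A X theta -> partially_equivariant A X partial_of_equivariant.
Proof.
  intros [Hiso [Hcocycle Hunit]]. split; [| split; [| split]].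
  - intros g Y. unfold partial_of_equivariant.
    apply is_iso_comp; [apply is_iso_inv |].
    apply is_iso_tensm; [apply Hiso | apply is_iso_idm].
  - intros g Y Y' f.
    apply (iso_cancel_r (mJ (act A g) X Y) (mJ_iso _ _ _ _)).
    rewrite <- !comp_assoc, <- mJ_nat, fmap_id, comp_assoc, !partial_of_equivariant_mJ,
      <- !tensm_comp, !comp_id_l, !comp_id_r.
    reflexivity.
  - intros g h Y.
    apply (iso_cancel_r
      (fmap (act A g) (mJ (act A h) X Y) ⊚ mJ (act A g) (act A h X) (act A h Y))).
    { apply is_iso_comp; [apply mJ_iso | apply is_iso_fmap, mJ_iso]. }
    assert (Hgam : gam A g h (X ⊗ Y)
        ⊚ (fmap (act A g) (mJ (act A h) X Y) ⊚ mJ (act A g) (act A h X) (act A h Y))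
      = mJ (act A (gmul g h)) X Y ⊚ (gam A g h X ⊗m gam A g h Y)).
    { rewrite comp_assoc. apply gam_monJ. }
    transitivity ((theta g ⊚ fmap (act A g) (theta h)) ⊗m gam A g h Y).
    + rewrite <- comp_assoc, Hgam, comp_assoc, partial_of_equivariant_mJ, <- tensm_comp,
        Hcocycle, comp_id_l.
      reflexivity.
    + rewrite !comp_assoc, (postcomp_eq _ (eq_sym (fmap_comp _ _ _ _ _ _ _))),
        partial_of_equivariant_mJ, <- comp_assoc, <- mJ_nat, comp_assoc,
        (postcomp_eq _ (partial_of_equivariant_mJ _ _)), fmap_id, <- !tensm_comp,
        !comp_id_l, !comp_id_r.
      reflexivity.
  - intros Y.
    rewrite uu_monJ, comp_assoc, partial_of_equivariant_mJ, <- tensm_comp, Hunit, comp_id_l.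
    reflexivity.
Qed.

End GlobalToPartial.

Theorem theorem6p4 (G : Group) (M : MonoidalCategory) (Mstrict : strict_monoidal M)
    (A : GAction G M) (X : ob M) :
  ((exists sigma : forall (g : G) (Y : ob M), hom (act A g (X ⊗ Y)) (X ⊗ act A g Y),
       partially_equivariant A X sigma) ->
     exists theta : forall g : G, hom (act A g X) X, equivariant A X theta)
  /\
  ((exists theta : forall g : G, hom (act A g X) X, equivariant A X theta) ->
     exists sigma : forall (g : G) (Y : ob M), hom (act A g (X ⊗ Y)) (X ⊗ act A g Y),
       partially_equivariant A X sigma).
Proof.
  split.
  - intros [sigma Hsigma].
    exists (transport_equivariant A (runit X) (runit_iso _ X) (partial_at_unit A X sigma)).
    apply equivariant_transport, partially_equivariant_at_unit, Hsigma.
  - intros [theta Htheta].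
    exists (partial_of_equivariant A X theta).
    apply equivariant_partially_equivariant, Htheta.
Qed.
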